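(* Let $\epsilon\in(0,1)$ and $0<h\le2\epsilon^2$. Then there exists an initial value $u_0$ with $|u_0|>1$ such that the sequence $(u_n)_{n\ge0}$ starting at $u_0$ and satisfying the implicit midpoint scheme $$\frac{u_n-u_{n-1}}{h}+\frac{1}{\epsilon^2}f\!\left(\frac{u_n+u_{n-1}}{2}\right)=0,\qquad n\ge1,\quad f(u)=u^3-u,$$ converges to an incorrect steady state, i.e. $\lim_{n\to\infty}u_n\ne\mathrm{sign}(u_0)$.
   Context: The scheme discretizes the ODE $u'(t)+\frac{1}{\epsilon^2}(u^3-u)=0$, $u(0)=u_0$, whose solutions converge to $\mathrm{sign}(u_0)$. For $h\le2\epsilon^2$ each step equation has a unique real solution $u_n$, so the sequence is uniquely determined. *)

From Stdlib Require Import Reals.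
Open Scope R_scope.

Definition f (u : R) : R := u ^ 3 - u.

Definition sign (x : R) : R :=
  if Rlt_dec 0 x then 1 else if Rlt_dec x 0 then -1 else 0.

(* u satisfies the implicit midpoint scheme with step h, parameter eps,
   for all n >= 1 (written with index n+1) *)
Definition midpoint_scheme (eps h : R) (u : nat -> R) : Prop :=
  forall n : nat,
    (u (S n) - u n) / h + / (eps ^ 2) * f ((u (S n) + u n) / 2) = 0.

(* For h <= 2 eps^2 each step of the scheme has at most one solution, so a
   solution is determined by u0.  Take u0 = 2 v with v^2 = 1 + 2 eps^2 / h:
   then u1 = 0 solves the first step and 0 is a fixed point, so the solution
   is u0, 0, 0, ..., which converges to 0 although sign u0 = 1. *)

From Stdlib Require Import Reals Lra Psatz.
Open Scope R_scope.

Definition midpoint_residual (eps h c x : R) : R :=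
  (x - c) / h + / eps ^ 2 * f ((x + c) / 2).

Lemma midpoint_residual_scaled (eps h c x : R) :
  eps <> 0 -> h <> 0 ->
  h * eps ^ 2 * midpoint_residual eps h c x = (x - c) * eps ^ 2 + h * f ((x + c) / 2).
Proof. intros He Hh. unfold midpoint_residual. field. split; assumption. Qed.

(* The cubic difference factors as 2 (m - m') (2 eps^2 - h + h (m^2 + m m' + m'^2))
   in the midpoints m, m'; the second factor is positive unless m = m'. *)
Lemma midpoint_residual_inj (eps h c x y : R) :
  0 < h <= 2 * eps ^ 2 ->
  midpoint_residual eps h c x = 0 -> midpoint_residual eps h c y = 0 -> x = y.
Proof.
  intros [Hh Hh2] Ex Ey.
  assert (He : eps <> 0) by (intros ->; simpl in Hh2; lra).
  pose proof (midpoint_residual_scaled eps h c x He ltac:(lra)) as Sx.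
  pose proof (midpoint_residual_scaled eps h c y He ltac:(lra)) as Sy.
  rewrite Ex, Rmult_0_r in Sx. rewrite Ey, Rmult_0_r in Sy.
  unfold f in Sx, Sy.
  set (m := (x + c) / 2) in Sx. set (m' := (y + c) / 2) in Sy.
  assert (Hx : x = 2 * m - c) by (unfold m; field).
  assert (Hy : y = 2 * m' - c) by (unfold m'; field).
  assert (Hfac : 2 * (m - m') * (2 * eps ^ 2 - h + h * (m ^ 2 + m * m' + m' ^ 2)) = 0).
  { rewrite Hx in Sx. rewrite Hy in Sy. lra. }
  destruct (Req_dec m m') as [Hmm | Hmm]; [lra |].
  exfalso.
  assert (Hq : 0 < m ^ 2 + m * m' + m' ^ 2).
  { assert (Hsos : 4 * (m ^ 2 + m * m' + m' ^ 2) = (2 * m + m') ^ 2 + 3 * m' ^ 2) by ring.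
    apply Rnot_le_lt; intro Hle; apply Hmm.
    assert (Hm' : m' = 0) by (apply Rsqr_0_uniq; unfold Rsqr; nra).
    assert (Hm : 2 * m + m' = 0) by (apply Rsqr_0_uniq; unfold Rsqr; nra).
    lra. }
  assert (Hpos : 0 < 2 * eps ^ 2 - h + h * (m ^ 2 + m * m' + m' ^ 2)) by nra.
  apply Rmult_integral in Hfac as [Hz | Hz]; lra.
Qed.

Lemma midpoint_scheme_unique (eps h : R) (u w : nat -> R) :
  0 < h <= 2 * eps ^ 2 ->
  midpoint_scheme eps h u -> midpoint_scheme eps h w ->
  u 0%nat = w 0%nat -> forall n, u n = w n.
Proof.
  intros Hh Hu Hw H0 n; induction n as [|n IH]; [exact H0 |].
  apply (midpoint_residual_inj eps h (u n)); [exact Hh | apply Hu |].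
  rewrite IH; apply Hw.
Qed.

Lemma midpoint_residual_0 (eps h : R) : midpoint_residual eps h 0 0 = 0.
Proof. unfold midpoint_residual, f, Rdiv; ring. Qed.

(* With midpoint v one has f v = v (v^2 - 1) = 2 v eps^2 / h, which exactly
   cancels the difference quotient (0 - 2 v) / h. *)
Lemma midpoint_residual_to_0 (eps h v : R) :
  eps <> 0 -> h <> 0 -> v ^ 2 = 1 + 2 * eps ^ 2 / h ->
  midpoint_residual eps h (2 * v) 0 = 0.
Proof.
  intros He Hh Hv.
  unfold midpoint_residual, f.
  replace ((0 + 2 * v) / 2) with v by field.
  replace (v ^ 3 - v) with (v * (v ^ 2 - 1)) by ring.
  rewrite Hv; field; split; assumption.
Qed.

Definition jump_to_0 (a : R) (n : nat) : R :=
  match n with O => a | S _ => 0 end.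

Lemma jump_to_0_cv (a : R) : Un_cv (jump_to_0 a) 0.
Proof.
  intros e He; exists 1%nat; intros [|n] Hn; [lia |].
  unfold R_dist; simpl; rewrite Rminus_0_r, Rabs_R0; exact He.
Qed.

Lemma midpoint_scheme_jump_to_0 (eps h a : R) :
  midpoint_residual eps h a 0 = 0 -> midpoint_scheme eps h (jump_to_0 a).
Proof. intros Ha [|n]; [exact Ha | apply midpoint_residual_0]. Qed.

Lemma sign_pos (x : R) : 0 < x -> sign x = 1.
Proof. intros Hx; unfold sign; destruct (Rlt_dec 0 x); [reflexivity | lra]. Qed.

Theorem lemma3p6 (eps h : R) :
  0 < eps < 1 -> 0 < h <= 2 * eps ^ 2 ->
  exists u0 : R, 1 < Rabs u0 /\
    (exists u : nat -> R, u 0%nat = u0 /\ midpoint_scheme eps h u) /\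
    (forall u : nat -> R, u 0%nat = u0 -> midpoint_scheme eps h u ->
       exists L : R, Un_cv u L /\ L <> sign u0).
Proof.
  intros [He _] Hh.
  assert (Hk : 0 < 2 * eps ^ 2 / h) by (apply Rdiv_lt_0_compat; lra).
  set (v := sqrt (1 + 2 * eps ^ 2 / h)).
  assert (Hv2 : v ^ 2 = 1 + 2 * eps ^ 2 / h)
    by (unfold v; rewrite <- Rsqr_pow2; apply Rsqr_sqrt; lra).
  assert (Hv1 : 1 < v) by (assert (0 <= v) by apply sqrt_pos; nra).
  assert (Hjump : midpoint_scheme eps h (jump_to_0 (2 * v))).
  { apply midpoint_scheme_jump_to_0, midpoint_residual_to_0; lra. }
  exists (2 * v); split; [| split].
  - rewrite Rabs_pos_eq; lra.
  - exists (jump_to_0 (2 * v)); split; [reflexivity | exact Hjump].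
  - intros u Hu0 Hu; exists 0; split.
    + apply (Un_cv_ext (jump_to_0 (2 * v))); [| apply jump_to_0_cv].
      intros n; symmetry; apply (midpoint_scheme_unique eps h); assumption.
    + rewrite sign_pos; lra.
Qed.
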